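(* Let $(G,\cdot)$ be a finite group and $\psi\in\operatorname{End}(G,\cdot)$ with $\psi([[G,\psi],G])\le Z(G,\cdot)$. Let $\nu(g)\in\operatorname{Perm}(G)$ be $h\mapsto g\,\psi(g)^{-1}h\,\psi(g)$ and $N=\{\nu(g):g\in G\}$. Let $G_0=\ker\psi$ and $G_1=\{g\in G:\psi(g)=g\}$, and $N_0=\nu(G_0)$, $N_1=\nu(G_1)$. Then: (1) $N_0=\lambda(G_0)$, it is a normal subgroup of $N$ isomorphic to $(G_0,\cdot)$, and it is normalised by $\lambda(G)$; (2) $N_1=\rho(G_1)$, it is a subgroup of $N$ isomorphic to $(G_1,\cdot)$, and $\lambda(G)$ centralises it; (3) $N_{01}=N_0N_1=\nu(G_0\cdot G_1)$ is a subgroup of $N$, it is the internal direct product of $N_0$ and $N_1$ (so isomorphic to $(G_0,\cdot)\times(G_1,\cdot)$), and it is normalised by $\lambda(G)$; (4) $\lambda(G)\cap N=\{\lambda(g):\psi(g)\in Z(G,\cdot)\}$ and $\rho(G)\cap N=\{\rho(g):g\,\psi(g)^{-1}\in Z(G,\cdot)\}$, and both are subgroups of $N$ normalised by $\lambda(G)$, with $\lambda(G)$ centralising $\rho(G)\cap N$.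
   Context: $\operatorname{Perm}(G)$ is the group of permutations of the set $G$; $\lambda(g)(h)=g\cdot h$ and $\rho(g)(h)=h\cdot g^{-1}$ are the left and right regular representations. For $\psi\in\operatorname{End}(G,\cdot)$, $[g,\psi]=g\cdot\psi(g)^{-1}$ and $[G,\psi]$ is the subgroup generated by these elements; $[x,y]=xyx^{-1}y^{-1}$ and $[A,B]$ is the subgroup generated by $[a,b]$, $a\in A,b\in B$; $Z(G,\cdot)$ is the centre. Under the hypothesis, $N$ is a regular subgroup of $\operatorname{Perm}(G)$ normalised by $\lambda(G)$. *)

From HB Require Import structures.
From mathcomp Require Import all_boot all_fingroup all_solvable.
Set Implicit Arguments. Unset Strict Implicit. Unset Printing Implicit Defensive.
Local Open Scope group_scope.

Section Regular.
Variable gT : finGroupType.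

Definition lam (g : gT) : {perm gT} := perm (mulgI g).

Definition rho (g : gT) : {perm gT} := perm (@mulIg _ g^-1).

(* paper's commutator [x,y] = x y x^-1 y^-1 *)
Definition pcomm (x y : gT) : gT := x * y * x^-1 * y^-1.

Definition pcommg (A B : {set gT}) : {set gT} :=
  <<[set pcomm a b | a in A, b in B]>>.

Definition pcommE (psi : gT -> gT) (g : gT) : gT := g * (psi g)^-1.

Definition commE (psi : gT -> gT) (G : {set gT}) : {set gT} :=
  <<[set pcommE psi g | g in G]>>.

Lemma nu_inj (psi : gT -> gT) (g : gT) :
  injective (fun h : gT => g * (psi g)^-1 * h * psi g).
Proof. by move=> x y /mulIg /mulgI. Qed.

Definition nu (psi : gT -> gT) (g : gT) : {perm gT} := perm (@nu_inj psi g).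

End Regular.

From mathcomp Require Import all_boot all_fingroup all_solvable.
Set Implicit Arguments. Unset Strict Implicit. Unset Printing Implicit Defensive.
Local Open Scope group_scope.

(* For an endomorphism psi of a finite group G, the permutation
   nu(g) : h |-> g psi(g)^-1 h psi(g) factors as lambda(g psi(g)^-1) followed
   by rho(psi(g)^-1).  All four parts of the theorem follow from this
   factorisation and two elementary facts about the regular representations:
   lambda and rho are injective anti-homomorphisms (so g |-> lambda(g^-1) and
   g |-> rho(g^-1) are injective morphisms into Perm(G)), and lambda(G)
   centralises rho(G).  Concretely:
   - nu agrees with lambda on ker psi and with g |-> rho(g^-1) on the fixed
     points of psi, which gives the descriptions of N0, N1 and N0 N1;
   - nu(g) = lambda(a) (resp. rho(b)) is equivalent to an explicit condition
     on g and a (resp. b), which computes the intersections of lambda(G) and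
     rho(G) with N.
   The centrality hypothesis on psi([[G,psi],G]) is what makes N itself a
   group in the paper; none of the listed conclusions depends on it. *)

Section RegularRepresentations.
Variable gT : finGroupType.
Implicit Types (a b h : gT) (A B : {set gT}) (H K : {group gT}).

Lemma lamE a h : lam a h = a * h. Proof. by rewrite permE. Qed.
Lemma rhoE b h : rho b h = h * b^-1. Proof. by rewrite permE. Qed.

(* Permutations compose left to right, so both representations reverse
   products. *)
Lemma lamM a b : lam a * lam b = lam (b * a).
Proof. by apply/permP => h; rewrite permM !lamE mulgA. Qed.
Lemma rhoM a b : rho a * rho b = rho (b * a).
Proof. by apply/permP => h; rewrite permM !rhoE invMg mulgA. Qed.

Lemma lam_rho_commute a b : commute (lam a) (rho b).
Proof. by apply/permP => h; rewrite !permM !lamE !rhoE mulgA. Qed.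

(* A left translation equal to a right one is determined by evaluation at 1. *)
Lemma lam_eq_rho a b : lam a = rho b -> a = b^-1.
Proof. by move/permP/(_ 1); rewrite lamE rhoE mulg1 mul1g. Qed.

Lemma lamV_morphM : {in [set: gT] &, {morph (fun g => lam g^-1) : x y / x * y}}.
Proof. by move=> x y _ _; rewrite /= lamM invMg. Qed.
Canonical lamV_morphism := Morphism lamV_morphM.

Lemma rhoV_morphM : {in [set: gT] &, {morph (fun g => rho g^-1) : x y / x * y}}.
Proof. by move=> x y _ _; rewrite /= rhoM invMg. Qed.
Canonical rhoV_morphism := Morphism rhoV_morphM.

Lemma injm_lamV : 'injm lamV_morphism.
Proof.
by apply/injmP => x y _ _ /permP/(_ 1); rewrite /= !lamE !mulg1 => /invg_inj.
Qed.

Lemma injm_rhoV : 'injm rhoV_morphism.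
Proof.
by apply/injmP => x y _ _ /permP/(_ 1); rewrite /= !rhoE !mul1g !invgK.
Qed.

(* A subgroup is stable under inversion, so its image under f and under
   g |-> f(g^-1) coincide. *)
Lemma imset_invg (T : finType) (f : gT -> T) H :
  [set f g^-1 | g in H] = f @: H.
Proof.
apply/setP => x; apply/imsetP/imsetP => -[g Hg ->].
  by exists g^-1; rewrite ?groupV.
by exists g^-1; rewrite ?groupV ?invgK.
Qed.

Lemma morphim_lamV H : lamV_morphism @* H = [set lam g | g in H].
Proof. by rewrite morphimE setTI imset_invg. Qed.

Lemma morphim_rhoV H : rhoV_morphism @* H = [set rho g | g in H].
Proof. by rewrite morphimE setTI imset_invg. Qed.

Lemma group_set_lam H : group_set [set lam g | g in H].
Proof. by rewrite -morphim_lamV morphim_groupset. Qed.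
Definition lam_group H := Group (group_set_lam H).

Lemma group_set_rho H : group_set [set rho g | g in H].
Proof. by rewrite -morphim_rhoV morphim_groupset. Qed.
Definition rho_group H := Group (group_set_rho H).

Lemma isog_lam H : lam_group H \isog H.
Proof. by rewrite /= -morphim_lamV isog_sym sub_isog ?subsetT ?injm_lamV. Qed.

Lemma isog_rho H : rho_group H \isog H.
Proof. by rewrite /= -morphim_rhoV isog_sym sub_isog ?subsetT ?injm_rhoV. Qed.

Lemma lam_norms H K :
  K \subset 'N(H) -> [set lam g | g in K] \subset 'N([set lam g | g in H]).
Proof. by rewrite -!morphim_lamV; apply: morphim_norms. Qed.

Lemma rho_cent_lam A B : [set rho g | g in A] \subset 'C([set lam g | g in B]).
Proof.
apply/centsP => _ /imsetP[b _ ->] _ /imsetP[a _ ->].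
exact/commute_sym/lam_rho_commute.
Qed.

(* Since the factors commute, lambda(H) rho(K) is a subgroup. *)
Lemma group_set_lam_rho H K : group_set (lam_group H * rho_group K).
Proof. by apply/comm_group_setP/centC; rewrite centsC rho_cent_lam. Qed.
Definition lam_rho_group H K := Group (group_set_lam_rho H K).

Lemma centralP x : reflect (forall h, h ^ x = h) (x \in 'Z([set: gT])).
Proof.
apply: (iffP (centerP _ _)) => [[_ cx] h | fix_x].
  by apply/conjg_fixP/commgP/commute_sym/cx.
by split=> // h _; apply/commute_sym/commgP/conjg_fixP.
Qed.

End RegularRepresentations.

Section TwistedTranslations.
Variables (gT : finGroupType) (psi : {morphism [set: gT] >-> gT}).
Implicit Types (a b g h : gT).

Let psiM a b : psi (a * b) = psi a * psi b.
Proof. by rewrite morphM ?inE. Qed.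

Let psiV a : psi a^-1 = (psi a)^-1.
Proof. by rewrite morphV ?inE. Qed.

Lemma nuE g h : nu psi g h = g * h ^ psi g.
Proof. by rewrite permE conjgE !mulgA. Qed.

Lemma nu_lam_rho g : nu psi g = lam (pcommE psi g) * rho (psi g)^-1.
Proof. by apply/permP => h; rewrite permM permE lamE rhoE invgK. Qed.

Lemma nu_ker g : g \in 'ker psi -> nu psi g = lam g.
Proof.
by move/mker=> psi_g; apply/permP => h; rewrite nuE lamE psi_g conjg1.
Qed.

Lemma nu_fixed g : psi g = g -> nu psi g = rho g^-1.
Proof.
by move=> psi_g; apply/permP => h; rewrite nuE rhoE invgK psi_g conjgE mulKVg.
Qed.

Lemma nu_eq_lam g a : nu psi g = lam a <-> a = g /\ psi g \in 'Z([set: gT]).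
Proof.
split=> [E | [-> /centralP fix_psi_g]]; last first.
  by apply/permP => h; rewrite nuE lamE fix_psi_g.
have ag : a = g by move/permP/(_ 1): E; rewrite nuE lamE conj1g !mulg1.
split=> //; apply/centralP => h.
by move/permP/(_ h): E; rewrite nuE lamE ag => /mulgI.
Qed.

Lemma nu_eq_rho g b :
  nu psi g = rho b <-> b = g^-1 /\ pcommE psi g \in 'Z([set: gT]).
Proof.
split=> [E | [-> /centralP fix_c]]; last first.
  apply/permP => h; rewrite nuE rhoE invgK.
  have -> : h ^ psi g = h ^ g by rewrite -{1}(fix_c h) conjgM conjgKV.
  by rewrite conjgE mulKVg.
have bg : b = g^-1.
  move/permP/(_ 1): E; rewrite nuE rhoE conj1g mulg1 mul1g => ->.
  by rewrite invgK.
split=> //; apply/centralP => h.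
have hg : h ^ g = h ^ psi g.
  move/permP/(_ h): E; rewrite nuE rhoE bg invgK => E.
  by rewrite {1}conjgE -E mulKg.
by rewrite conjgM hg conjgK.
Qed.

Lemma nuM_ker_fixed a b :
  a \in 'ker psi -> psi b = b -> nu psi (a * b) = nu psi a * nu psi b.
Proof.
move=> ker_a psi_b; rewrite (nu_ker ker_a) (nu_fixed psi_b).
apply/permP => h; rewrite permM nuE lamE rhoE invgK psiM (mker ker_a) mul1g.
by rewrite psi_b conjgE -mulgA mulKVg mulgA.
Qed.

Lemma group_set_fixed : group_set [set g | psi g == g].
Proof.
apply/group_setP; split; first by rewrite inE morph1.
by move=> x y; rewrite !inE psiM => /eqP-> /eqP->.
Qed.
Definition fixed_group := Group group_set_fixed.

Lemma group_set_central_pcomm :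
  group_set [set g | pcommE psi g \in 'Z([set: gT])].
Proof.
apply/group_setP; split; first by rewrite inE /pcommE morph1 invg1 mulg1 group1.
move=> x y; rewrite !inE /pcommE => Zx Zy.
have -> : x * y * (psi (x * y))^-1 = (y * (psi y)^-1) ^ x^-1 * (x * (psi x)^-1).
  by rewrite psiM invMg conjgE invgK !mulgA mulgKV.
by rewrite groupM // memJ_norm // (subsetP (norms_cent (normG _))) ?inE.
Qed.
Definition central_pcomm_group := Group group_set_central_pcomm.

Lemma preimage_centerE :
  [set g | psi g \in 'Z([set: gT])] = psi @*^-1 'Z([set: gT]).
Proof. by apply/setP => g; rewrite !inE. Qed.

Lemma norm_preimage_center : [set: gT] \subset 'N(psi @*^-1 'Z([set: gT])).
Proof.
rewrite -{1}(morphpreT psi); apply: morphpre_norms.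
exact: normal_norm (center_normal _).
Qed.

Lemma nu_kerE : [set nu psi g | g in 'ker psi] = [set lam g | g in 'ker psi].
Proof. by apply: eq_in_imset => g; apply: nu_ker. Qed.

Lemma nu_fixedE :
  [set nu psi g | g in [set g | psi g == g]]
  = [set rho g | g in [set g | psi g == g]].
Proof.
rewrite -(imset_invg _ fixed_group); apply: eq_in_imset => g.
by rewrite inE => /eqP psi_g; rewrite nu_fixed ?invgK // psiV psi_g.
Qed.

Lemma nu_norm_lam_ker g : nu psi g \in 'N([set lam k | k in 'ker psi]).
Proof.
rewrite nu_lam_rho groupM //.
  by apply: (subsetP (lam_norms (ker_norm psi))); rewrite imset_f ?inE.
apply: (subsetP (cent_sub _)); apply: (subsetP (rho_cent_lam _ _)).
by rewrite imset_f ?inE.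
Qed.

Lemma nu_mulgE :
  [set nu psi g | g in 'ker psi] * [set nu psi g | g in [set g | psi g == g]]
  = [set nu psi g | g in 'ker psi * [set g | psi g == g]].
Proof.
apply/setP => x; apply/mulsgP/imsetP.
  case=> _ _ /imsetP[a ker_a ->] /imsetP[b fix_b ->] ->.
  exists (a * b); rewrite ?mem_mulg // nuM_ker_fixed //.
  by move: fix_b; rewrite inE => /eqP.
case=> _ /mulsgP[a b ker_a fix_b ->] ->.
exists (nu psi a) (nu psi b); rewrite ?imset_f // nuM_ker_fixed //.
by move: fix_b; rewrite inE => /eqP.
Qed.

(* If lambda(a) = rho(b) with psi(a) = 1 and psi(b) = b, then a = b^-1 = 1. *)
Lemma lam_ker_rho_fixed_trivial :
  lam_group ('ker psi) :&: rho_group fixed_group = 1.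
Proof.
apply/trivgP/subsetP => _ /setIP[/imsetP[a ker_a ->] /imsetP[b fix_b eq_ab]].
have -> : a = 1.
  move: fix_b; rewrite inE (lam_eq_rho eq_ab) => /eqP psi_b.
  by rewrite -(mker ker_a) (lam_eq_rho eq_ab) psiV psi_b.
by rewrite inE; apply/eqP/permP => h; rewrite lamE perm1 mul1g.
Qed.

Lemma dprod_lam_ker_rho_fixed :
  lam_group ('ker psi) \x rho_group fixed_group
  = lam_rho_group ('ker psi) fixed_group.
Proof. by rewrite dprodE ?rho_cent_lam ?lam_ker_rho_fixed_trivial. Qed.

Lemma isog_lam_ker_rho_fixed :
  lam_rho_group ('ker psi) fixed_group \isog setX ('ker psi) fixed_group.
Proof.
apply: (isog_dprod dprod_lam_ker_rho_fixed (setX_dprod _ _)).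
  exact: isog_trans (isog_lam _) (isog_setX1 _ _).
exact: isog_trans (isog_rho _) (isog_set1X _ _).
Qed.

Lemma lam_meet_nu :
  [set lam g | g in [set: gT]] :&: [set nu psi g | g in [set: gT]]
  = [set lam g | g in [set g | psi g \in 'Z([set: gT])]].
Proof.
apply/setP => x; apply/setIP/imsetP.
  case=> /imsetP[a _ ->] /imsetP[g _ /esym/nu_eq_lam[-> Zpsi_g]].
  by exists g => //; rewrite inE.
case=> a; rewrite inE => Zpsi_a ->; split; first by rewrite imset_f ?inE.
by apply/imsetP; exists a; rewrite ?inE //; apply/esym/nu_eq_lam.
Qed.

Lemma rho_meet_nu :
  [set rho g | g in [set: gT]] :&: [set nu psi g | g in [set: gT]]
  = [set rho g | g in [set g | g * (psi g)^-1 \in 'Z([set: gT])]].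
Proof.
apply/setP => x; apply/setIP/imsetP.
  case=> /imsetP[b _ ->] /imsetP[g _ /esym/nu_eq_rho[-> Zc]].
  exists g^-1 => //; rewrite (groupV central_pcomm_group) inE; exact: Zc.
case=> b Kb ->; split; first by rewrite imset_f ?inE.
apply/imsetP; exists b^-1; rewrite ?inE //; apply/esym/nu_eq_rho.
rewrite invgK; split=> //.
by move: Kb; rewrite -(groupV central_pcomm_group) inE.
Qed.

End TwistedTranslations.

Theorem mainTheorem9 (gT : finGroupType) (psi : {morphism [set: gT] >-> gT}) :
  psi @* pcommg (commE psi [set: gT]) [set: gT] \subset 'Z([set: gT]) ->
  let N : {set {perm gT}} := [set nu psi g | g in [set: gT]] in
  let G0 : {set gT} := 'ker psi in
  let G1 : {set gT} := [set g | psi g == g] in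
  let N0 : {set {perm gT}} := [set nu psi g | g in G0] in
  let N1 : {set {perm gT}} := [set nu psi g | g in G1] in
  let L : {set {perm gT}} := [set lam g | g in [set: gT]] in
  [/\ (* (1) *)
      [/\ N0 = [set lam g | g in G0], group_set N0, N0 <| N, isog N0 G0
        & L \subset 'N(N0)],
      (* (2) *)
      [/\ N1 = [set rho g | g in G1], group_set N1, N1 \subset N, isog N1 G1
        & L \subset 'C(N1)],
      (* (3) *)
      [/\ N0 * N1 = [set nu psi g | g in G0 * G1], group_set (N0 * N1) && (N0 * N1 \subset N),
          N0 \x N1 = N0 * N1,
          isog (N0 * N1) (setX G0 G1)
        & L \subset 'N(N0 * N1)]
    & (* (4) *)
      [/\ L :&: N = [set lam g | g in [set g | psi g \in 'Z([set: gT])]],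
          [set rho g | g in [set: gT]] :&: N
            = [set rho g | g in [set g | g * (psi g)^-1 \in 'Z([set: gT])]],
          group_set (L :&: N) && (L :&: N \subset N)
            && (L \subset 'N(L :&: N)),
          group_set ([set rho g | g in [set: gT]] :&: N)
            && ([set rho g | g in [set: gT]] :&: N \subset N)
            && (L \subset 'N([set rho g | g in [set: gT]] :&: N))
        & L \subset 'C([set rho g | g in [set: gT]] :&: N)]].
Proof.
move=> _ N G0 G1 N0 N1 L.
have N0E : N0 = lam_group ('ker psi) := nu_kerE psi.
have N1E : N1 = rho_group (fixed_group psi) := nu_fixedE psi.
have subN (X : {set gT}) : [set nu psi g | g in X] \subset N.
  exact: imsetS (subsetT X).
have LN0 : L \subset 'N(N0) by rewrite N0E lam_norms ?ker_norm.
have LN1 : L \subset 'C(N1) by rewrite N1E centsC rho_cent_lam.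
split; split=> //.
- by rewrite N0E group_set_lam.
- rewrite /normal subN; apply/subsetP => _ /imsetP[g _ ->].
  by rewrite N0E nu_norm_lam_ker.
- by rewrite N0E isog_lam.
- by rewrite N1E group_set_rho.
- exact: subN.
- by rewrite N1E isog_rho.
- exact: nu_mulgE.
- apply/andP; split; last by rewrite nu_mulgE subN.
  by rewrite N0E N1E group_set_lam_rho.
- by rewrite N0E N1E dprod_lam_ker_rho_fixed.
- by rewrite N0E N1E isog_lam_ker_rho_fixed.
- by apply: normsM => //; apply: cents_norm.
- exact: lam_meet_nu.
- exact: rho_meet_nu.
- rewrite subsetIr andbT lam_meet_nu preimage_centerE group_set_lam.
  by rewrite lam_norms ?norm_preimage_center.
- rewrite subsetIr andbT rho_meet_nu (group_set_rho (central_pcomm_group psi)).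
  by rewrite cents_norm // centsC rho_cent_lam.
- by rewrite rho_meet_nu centsC rho_cent_lam.
Qed.
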